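(* Let $k\subset K$ be differential fields of characteristic zero with the same field of constants $C$, assumed algebraically closed, and assume there is $x\in k$ with $x'=1$. Let $f_1,\dots,f_n\in K$ be iterated integrals over $k$. If $f_1,\dots,f_n$ are algebraically dependent over $k$, then there exist $u_1,\dots,u_n\in k$, not all zero, such that $u_1f_1+\cdots+u_nf_n\in k$.
   Context: An element $f\in K$ is an iterated integral over $k$ if $f^{(m)}\in k$ for some $m\in\mathbb{N}$. Here $k$ need not be algebraically closed. *)

From HB Require Import structures.
From mathcomp Require Import all_boot all_order all_algebra.
From mathcomp Require Import mpoly.
Set Implicit Arguments. Unset Strict Implicit. Unset Printing Implicit Defensive.
Import Order.TTheory GRing.Theory.
Local Open Scope ring_scope.

Definition derivation (K : fieldType) (D : K -> K) : Prop :=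
  (forall a b, D (a + b) = D a + D b) /\ (forall a b, D (a * b) = D a * b + a * D b).

Definition char0 (K : fieldType) : Prop := forall n : nat, (n.+1)%:R != 0 :> K.

Definition diff_subfield (K : fieldType) (D : K -> K) (k : pred K) : Prop :=
  0 \in k /\ 1 \in k /\
  (forall a b, a \in k -> b \in k -> a + b \in k) /\
  (forall a, a \in k -> - a \in k) /\
  (forall a b, a \in k -> b \in k -> a * b \in k) /\
  (forall a, a \in k -> a^-1 \in k) /\
  (forall a, a \in k -> D a \in k).

Definition same_constants (K : fieldType) (D : K -> K) (k : pred K) : Prop :=
  forall c, D c = 0 -> c \in k.

Definition constants_alg_closed (K : fieldType) (D : K -> K) : Prop :=
  forall p : {poly K}, (forall i, D p`_i = 0) -> (1 < size p)%N ->
    exists c, D c = 0 /\ root p c.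

Definition iterated_integral (K : fieldType) (D : K -> K) (k : pred K) (f : K) : Prop :=
  exists m : nat, iter m D f \in k.

Definition alg_dependent (K : fieldType) (k : pred K) (n : nat) (f : 'I_n -> K) : Prop :=
  exists P : {mpoly K[n]}, [/\ P != 0, (forall m, P@_m \in k) & P.@[f] = 0].

From HB Require Import structures.
From mathcomp Require Import all_boot all_order all_algebra.
From mathcomp Require Import mpoly.
From mathcomp Require Import ring.
From Stdlib Require Import Classical_Prop.
Import Order.TTheory GRing.Theory.
Local Open Scope ring_scope.

Set Implicit Arguments. Unset Strict Implicit. Unset Printing Implicit Defensive.

(* Integrating by parts with x' = 1 shows that every iterated integral lies in
   k + k y_1 + ... + k y_r for finitely many primitives y_s (y_s' \in k).
   Substituting these expressions into an algebraic relation P among the f_i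
   gives a polynomial Q over k with Q(y) = 0.  If Q = 0, the affine substitution
   has no right inverse, so its coefficient matrix has k-linearly dependent rows,
   and these give the u_i.  If Q <> 0 we run the Kolchin-Ostrowski argument: take
   such a Q with minimal leading monomial and leading coefficient 1.  The
   derivation of K[X] extending D by X_s' = y_s' maps Q to a relation with a
   smaller leading monomial, hence kills it; so each dQ/dX_s takes a constant
   value at y, which lies in k, and minimality forces dQ/dX_s to be that
   constant.  In characteristic zero Q is then affine, i.e. the y_s are linearly
   dependent modulo k, so one of them can be dropped and we conclude by induction
   on r. *)

Section SubfieldType.
Variables (F : fieldType) (S : divringClosed F).

Inductive subfield_type := SubfieldElem x of x \in S.
Definition subfield_val u := let: SubfieldElem x _ := u in x.
HB.instance Definition _ := [isSub for subfield_val].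
HB.instance Definition _ := [Choice of subfield_type by <:].
HB.instance Definition _ := [SubChoice_isSubIntegralDomain of subfield_type by <:].
HB.instance Definition _ := [SubIntegralDomain_isSubField of subfield_type by <:].

Lemma rows_dependent_or_right_invertible n r (L : 'I_n -> 'I_r -> F) :
  (forall i s, L i s \in S) ->
  (exists u : 'I_n -> F,
     [/\ forall i, u i \in S, exists i, u i != 0 & forall s, \sum_i u i * L i s = 0])
  \/ (exists R : 'I_r -> 'I_n -> F, forall i j, \sum_s L i s * R s j = (i == j)%:R).
Proof.
move=> SL; pose M : 'M[subfield_type]_(n, r) := \matrix_(i, s) Sub (L i s) (SL i s).
have ME i s : val (M i s) = L i s by rewrite mxE.
have [/row_freeP [R MR] | ] := boolP (row_free M).
  right; exists (fun s j => val (R s j)) => i j.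
  have /(congr1 (fun A : 'M_n => val (A i j))) := MR.
  rewrite !mxE rmorph_sum rmorph_nat => <-.
  by apply: eq_bigr => s _; rewrite rmorphM -ME.
rewrite -kermx_eq0 => /matrix0Pn [i0 [j0 nz_ker]]; left.
exists (fun j => val (kermx M i0 j)); split.
- by move=> j; apply: valP.
- by exists j0; rewrite fmorph_eq0.
- move=> s; have /(congr1 (fun A : 'M_(n, r) => val (A i0 s))) := mulmx_ker M.
  rewrite !mxE rmorph_sum rmorph0 => ker0; rewrite -[RHS]ker0.
  by apply: eq_bigr => j _; rewrite rmorphM -ME.
Qed.

End SubfieldType.

Lemma comp_mpolyA (R : comNzRingType) n r q (p : {mpoly R[n]})
    (lq : n.-tuple {mpoly R[r]}) (lq' : r.-tuple {mpoly R[q]}) :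
  (p \mPo lq) \mPo lq' = p \mPo [tuple tnth lq i \mPo lq' | i < n].
Proof.
rewrite [p \mPo lq]comp_mpolyE [RHS]comp_mpolyE raddf_sum /=; apply: eq_bigr => m _.
rewrite comp_mpolyZ rmorph_prod; congr (_ *: _); apply: eq_bigr => i _.
by rewrite rmorphXn tnth_mktuple.
Qed.

Lemma comp_mpoly_affine_eq0 (R : comNzRingType) n r (P : {mpoly R[n]})
    (b : 'I_n -> R) (c : 'I_n -> 'I_r -> R) (d : 'I_r -> 'I_n -> R) :
  (forall i j, \sum_s c i s * d s j = (i == j)%:R) ->
  P \mPo [tuple (b i)%:MP + \sum_s c i s *: 'X_s | i < n] = 0 -> P = 0.
Proof.
set lq := [tuple _ | i < n] => cd P0.
pose inv_lq := [tuple \sum_j d s j *: ('X_j - (b j)%:MP) | s < r].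
suff lq_inv : [tuple tnth lq i \mPo inv_lq | i < n] = [tuple 'X_i | i < n].
  by rewrite -[P]comp_mpoly_id -lq_inv -comp_mpolyA P0 comp_mpoly0.
apply: eq_from_tnth => i; rewrite !tnth_mktuple comp_mpolyD comp_mpolyC raddf_sum /=.
under eq_bigr do rewrite comp_mpolyZ comp_mpolyXU -tnth_nth tnth_mktuple scaler_sumr.
rewrite exchange_big /=.
under eq_bigr do (under eq_bigr do rewrite scalerA; rewrite -scaler_suml cd).
rewrite (bigD1 i) //= eqxx scale1r big1 => [|j /negPf ji]; last first.
  by rewrite eq_sym ji scale0r.
by rewrite addr0 addrC subrK.
Qed.

Lemma mlead_lt (R : nzRingType) n (p : {mpoly R[n]}) (m0 : 'X_{1..n}) :
  p != 0 -> (forall m, (m0 <= m)%O -> p@_m = 0) -> (mlead p < m0)%O.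
Proof.
move=> p0 p_ge; rewrite ltNge; apply/negP => /p_ge /eqP.
by rewrite mleadc_eq0 (negPf p0).
Qed.

Lemma mnm_neq0_addU n (m : 'X_{1..n}) :
  m != 0%MM -> exists i, m = (m - U_(i) + U_(i))%MM.
Proof.
move=> m_neq0; have [i mi_neq0] : exists i, m i != 0%N.
  apply/existsP; apply: contraNT m_neq0 => /existsPn m0.
  by apply/eqP/mnmP => i; rewrite mnm0E; apply/eqP/negPn/m0.
by exists i; rewrite submK // lep1mP.
Qed.

Lemma mpoly_deg1E (R : nzRingType) n (p : {mpoly R[n]}) :
  (forall m, (1 < mdeg m)%N -> p@_m = 0) ->
  p = (p@_0%MM)%:MP + \sum_i p@_U_(i) *: 'X_i.
Proof.
move=> p_deg; apply/mpolyP => m; rewrite mcoeffD mcoeffC raddf_sum /=.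
under eq_bigr do rewrite mcoeffZ mcoeffX.
have [->|m_neq0] := eqVneq m 0%MM.
  by rewrite mulr1 big1 ?addr0 // => i _; rewrite mnm1_eq0 mulr0.
rewrite mulr0 add0r; case: (ltngtP (mdeg m) 1) => [|m_gt1|m_eq1].
- by rewrite ltnS leqn0 mdeg_eq0 (negPf m_neq0).
- rewrite p_deg // big1 // => i _.
  have /negPf -> : U_(i)%MM != m by apply/eqP => Um; move: m_gt1; rewrite -Um mdeg1.
  by rewrite mulr0.
- have /mdeg1P [i /eqP ->] : mdeg m == 1%N by rewrite m_eq1.
  rewrite (bigD1 i) //= eqxx mulr1 big1 ?addr0 // => j /negPf ji.
  by rewrite eq_mnm1 ji mulr0.
Qed.

Lemma mderiv_const_deg1 (F : fieldType) n (p : {mpoly F[n]}) :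
  char0 F -> (forall i, exists c, p^`M(i) = c%:MP) ->
  forall m, (1 < mdeg m)%N -> p@_m = 0.
Proof.
move=> F0 p_const m m_gt1; have [i mE] : exists i, m = (m - U_(i) + U_(i))%MM.
  by apply: mnm_neq0_addU; rewrite -mdeg_eq0 -lt0n (ltn_trans _ m_gt1).
have [c /(congr1 (mcoeff (m - U_(i))))] := p_const i.
rewrite mcoeff_deriv -mE mcoeffC.
have /negPf -> : (m - U_(i))%MM != 0%MM.
  by rewrite -mdeg_eq0 -lt0n; move: m_gt1; rewrite {1}mE mdegD mdeg1 addn1.
by rewrite mulr0 -mulr_natr => /eqP; rewrite mulf_eq0 (negPf (F0 _)) orbF => /eqP.
Qed.

Section Derivation.
Variables (K : fieldType) (D : K -> K).
Hypothesis D_der : derivation D.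

Lemma derD a b : D (a + b) = D a + D b. Proof. by case: D_der. Qed.
Lemma derM a b : D (a * b) = D a * b + a * D b. Proof. by case: D_der. Qed.
Lemma der0 : D 0 = 0. Proof. by apply: (@addrI _ (D 0)); rewrite -derD !addr0. Qed.
Lemma derN a : D (- a) = - D a.
Proof. by apply/eqP; rewrite -addr_eq0 -derD addNr der0. Qed.
Lemma derB a b : D (a - b) = D a - D b. Proof. by rewrite derD derN. Qed.
Lemma der_sum (I : Type) (r : seq I) (P : pred I) (F : I -> K) :
  D (\sum_(i <- r | P i) F i) = \sum_(i <- r | P i) D (F i).
Proof. exact: (big_morph D derD der0). Qed.
Lemma derMn a m : D (a *+ m) = D a *+ m.
Proof. by elim: m => [|m IH]; rewrite ?mulr0n ?der0 // !mulrS derD IH. Qed.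
Lemma der1 : D 1 = 0.
Proof. by have := derM 1 1; rewrite !mul1r mulr1 -{1}(addr0 (D 1)) => /addrI <-. Qed.
Lemma der_nat m : D m%:R = 0. Proof. by rewrite derMn der1 mul0rn. Qed.
Lemma derX a m : D (a ^+ m.+1) = m.+1%:R * a ^+ m * D a.
Proof.
elim: m => [|m IH]; first by rewrite expr1 expr0 mulr1 mul1r.
by rewrite exprS derM IH exprS -[m.+2%:R]natr1; ring.
Qed.
Lemma derV a : D a = 0 -> D a^-1 = 0.
Proof.
have [->|a_neq0 Da] := eqVneq a 0; first by rewrite invr0.
have := derM a a^-1; rewrite mulfV // der1 Da mul0r add0r => /esym/eqP.
by rewrite mulf_eq0 (negPf a_neq0) => /eqP.
Qed.

Section LiftDerivation.
Variables (r : nat) (y : 'I_r -> K).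

Definition coef_deriv (Q : {mpoly K[r]}) : {mpoly K[r]} :=
  \sum_(m <- msupp Q) D Q@_m *: 'X_[m].
Definition dir_mderiv (Q : {mpoly K[r]}) : {mpoly K[r]} :=
  \sum_s D (y s) *: Q^`M(s).
Definition lift_deriv Q := coef_deriv Q + dir_mderiv Q.

Lemma mcoeff_coef_deriv Q m : (coef_deriv Q)@_m = D Q@_m.
Proof.
rewrite /coef_deriv raddf_sum /=; under eq_bigr do rewrite mcoeffZ mcoeffX.
have [m_supp | m_nsupp] := boolP (m \in msupp Q); last first.
  rewrite (memN_msupp_eq0 m_nsupp) der0 big1_seq // => m' /= m'_supp.
  have /negPf -> : m' != m by apply: contraNneq m_nsupp => <-.
  by rewrite mulr0.
rewrite (bigD1_seq m) ?msupp_uniq //= eqxx mulr1 big1 ?addr0 // => m' /negPf.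
by rewrite eq_sym => ->; rewrite mulr0.
Qed.

Lemma mcoeff_dir_mderiv Q m :
  (dir_mderiv Q)@_m = \sum_s D (y s) * (Q@_(m + U_(s)) *+ (m s).+1).
Proof.
by rewrite /dir_mderiv raddf_sum; apply: eq_bigr => s _ /=; rewrite mcoeffZ mcoeff_deriv.
Qed.

Lemma mcoeff_lift_deriv Q m :
  (lift_deriv Q)@_m = D Q@_m + \sum_s D (y s) * (Q@_(m + U_(s)) *+ (m s).+1).
Proof. by rewrite mcoeffD mcoeff_coef_deriv mcoeff_dir_mderiv. Qed.

Lemma lift_derivD P Q : lift_deriv (P + Q) = lift_deriv P + lift_deriv Q.
Proof.
apply/mpolyP => m; rewrite mcoeffD !mcoeff_lift_deriv mcoeffD derD.
under eq_bigr do rewrite mcoeffD mulrnDl mulrDr.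
by rewrite big_split /=; ring.
Qed.

Lemma dir_mderivM P Q : dir_mderiv (P * Q) = dir_mderiv P * Q + P * dir_mderiv Q.
Proof.
rewrite /dir_mderiv mulr_suml mulr_sumr -big_split; apply: eq_bigr => s _ /=.
by rewrite mderivM scalerDr scalerAl scalerAr.
Qed.

Lemma dir_mderivXU s : dir_mderiv 'X_s = (D (y s))%:MP.
Proof.
rewrite /dir_mderiv (bigD1 s) //= big1 ?addr0 => [|t /negPf ts].
  rewrite mderivX mnm1E eqxx -{1}[U_(s)%MM]add0m addmK mpolyX0 !scale1r.
  by rewrite -mul_mpolyC mulr1.
by rewrite mderivX mnm1E eq_sym ts scale0r scaler0.
Qed.

Lemma dir_mderiv1 : dir_mderiv 1 = 0.
Proof. by rewrite /dir_mderiv big1 // => s _; rewrite -mpolyC1 mderivC scaler0. Qed.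

Lemma dir_mderivZ c Q : dir_mderiv (c *: Q) = c *: dir_mderiv Q.
Proof.
rewrite /dir_mderiv scaler_sumr; apply: eq_bigr => s _.
by rewrite mderivZ !scalerA mulrC.
Qed.

Lemma coef_derivZX c m : coef_deriv (c *: 'X_[m]) = D c *: 'X_[m].
Proof.
apply/mpolyP => m'; rewrite mcoeff_coef_deriv !mcoeffZ mcoeffX derM.
by rewrite der_nat mulr0 addr0.
Qed.

Lemma lift_deriv0 : lift_deriv 0 = 0.
Proof. by apply: (@addrI _ (lift_deriv 0)); rewrite -lift_derivD !addr0. Qed.

Lemma meval_dir_mderivX m :
  (dir_mderiv 'X_[m]).@[y] = D ('X_[m] : {mpoly K[r]}).@[y].
Proof.
have [N] := ubnP (mdeg m); elim: N m => // N IH m.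
have [-> _|/mnm_neq0_addU [s mE]] := eqVneq m 0%MM.
  by rewrite mpolyX0 dir_mderiv1 meval0 meval1 der1.
rewrite mE mdegD mdeg1 addn1 ltnS => lt_mN.
by rewrite mpolyXD dir_mderivM mevalD !mevalM IH // dir_mderivXU mevalC mevalXU derM.
Qed.

Lemma meval_lift_deriv Q : (lift_deriv Q).@[y] = D Q.@[y].
Proof.
elim/mpolyind: Q => [|c m p _ _ IH]; first by rewrite lift_deriv0 !meval0 der0.
rewrite lift_derivD mevalD IH [in RHS]mevalD derD; congr (_ + _).
by rewrite /lift_deriv mevalD coef_derivZX dir_mderivZ !mevalZ meval_dir_mderivX derM.
Qed.

Lemma mderiv_lift_deriv t Q : (lift_deriv Q)^`M(t) = lift_deriv Q^`M(t).
Proof.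
rewrite /lift_deriv mderivD; congr (_ + _).
  by apply/mpolyP => m; rewrite mcoeff_deriv !mcoeff_coef_deriv mcoeff_deriv derMn.
rewrite /dir_mderiv raddf_sum; apply: eq_bigr => s _ /=.
by rewrite mderivZ mderiv_comm.
Qed.

End LiftDerivation.

Section DifferentialSubfield.
Variable k : pred K.
Hypotheses (K0 : char0 K) (k_sub : diff_subfield D k) (k_const : same_constants D k).

Lemma k_divring_closed : GRing.divring_closed k.
Proof.
case: k_sub => k0 [k1 [kD [kN [kM [kV _]]]]]; split => // a b ka kb.
  by apply: kD => //; apply: kN.
by apply: kM => //; apply: kV.
Qed.

HB.instance Definition _ := GRing.isDivringClosed.Build K k k_divring_closed.

Lemma der_closed a : a \in k -> D a \in k.
Proof. by case: k_sub => _ [_ [_ [_ [_ [_ kD]]]]]; apply: kD. Qed.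

Definition primitive y := D y \in k.

Definition lindep_mod_k n (f : 'I_n -> K) := exists u : 'I_n -> K,
  [/\ forall i, u i \in k, exists i, u i != 0 & \sum_(i < n) u i * f i \in k].

Section KolchinOstrowski.
Variables (r : nat) (y : 'I_r -> K).
Hypothesis y_prim : forall s, primitive (y s).

Lemma lift_deriv_over (Q : {mpoly K[r]}) :
  Q \is a mpolyOver r k -> lift_deriv y Q \is a mpolyOver r k.
Proof.
move=> /mpolyOverP Q_k; apply/mpolyOverP => m; rewrite mcoeff_lift_deriv.
rewrite rpredD ?der_closed // rpred_sum // => s _.
by apply: rpredM; [exact: y_prim | rewrite rpredMn].
Qed.

Lemma mderiv_over t (Q : {mpoly K[r]}) :
  Q \is a mpolyOver r k -> Q^`M(t) \is a mpolyOver r k.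
Proof.
by move=> /mpolyOverP Q_k; apply/mpolyOverP => m; rewrite mcoeff_deriv rpredMn.
Qed.

Lemma lindep_of_affine_relation (Q : {mpoly K[r]}) :
  Q != 0 -> Q \is a mpolyOver r k -> Q.@[y] = 0 ->
  Q = (Q@_0%MM)%:MP + \sum_s Q@_U_(s) *: 'X_s -> lindep_mod_k y.
Proof.
move=> Q_neq0 /mpolyOverP Q_k Qy QE; exists (fun s => Q@_U_(s)); split => //.
  apply/existsP; apply: contraNT Q_neq0 => /existsPn QU_eq0.
  have QC : Q = (Q@_0%MM)%:MP.
    by rewrite {1}QE big1 ?addr0 // => s _; rewrite (eqP (negPn (QU_eq0 s))) scale0r.
  by have := Qy; rewrite {1}QC mevalC => Q0_eq0; rewrite QC Q0_eq0 mpolyC0.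
move: Qy; rewrite {1}QE mevalD mevalC raddf_sum /=.
under eq_bigr do rewrite mevalZ mevalXU.
by move/eqP; rewrite addrC addr_eq0 => /eqP ->; rewrite rpredN.
Qed.

Lemma minimal_relation_deg1 (Q : {mpoly K[r]}) m0 :
  Q \is a mpolyOver r k -> Q.@[y] = 0 -> Q@_m0 = 1 ->
  (forall m, (m0 < m)%O -> Q@_m = 0) ->
  (forall R, R \is a mpolyOver r k -> R.@[y] = 0 ->
     (forall m, (m0 <= m)%O -> R@_m = 0) -> R = 0) ->
  forall m, (1 < mdeg m)%N -> Q@_m = 0.
Proof.
move=> Q_k Qy Q_m0 Q_gt minQ.
have Q_geU m s : (m0 <= m)%O -> Q@_(m + U_(s)) = 0.
  move=> le_m0m; apply/Q_gt/(le_lt_trans le_m0m)/lt_mdeg_ltmc.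
  by rewrite mdegD mdeg1 addn1.
have m0_neq0 : m0 != 0%MM.
  apply/eqP => m0_eq0; suff Q_eq1 : Q = 1.
    by move: Qy; rewrite Q_eq1 meval1 => /eqP; rewrite oner_eq0.
  apply/mpolyP => m; rewrite mcoeff1; have [->|m_neq0] := eqVneq m 0%MM.
    by rewrite -m0_eq0 Q_m0.
  by rewrite Q_gt // m0_eq0 lt_def m_neq0 le0m.
have dQ : lift_deriv y Q = 0.
  apply: minQ; [exact: lift_deriv_over | by rewrite meval_lift_deriv Qy der0 |].
  move=> m le_m0m; rewrite mcoeff_lift_deriv big1 => [|s _]; last first.
    by rewrite Q_geU // mul0rn mulr0.
  move: le_m0m; rewrite addr0 le_eqVlt => /predU1P [<-|/Q_gt ->].
    by rewrite Q_m0 der1.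
  exact: der0.
apply: mderiv_const_deg1 K0 _ => t; pose c := (Q^`M(t)).@[y].
have c_k : c \in k.
  apply: k_const.
  by rewrite -meval_lift_deriv -mderiv_lift_deriv dQ mderiv0 meval0.
exists c; apply/eqP; rewrite -subr_eq0; apply/eqP/minQ.
- by rewrite rpredB ?mderiv_over ?mpolyOverC.
- by rewrite mevalB mevalC subrr.
move=> m le_m0m; have m_neq0 : m != 0%MM.
  apply: contraNneq m0_neq0 => m_eq0.
  by apply/eqP/le_anti; rewrite le0m -m_eq0 le_m0m.
by rewrite mcoeffB mcoeff_deriv Q_geU // mul0rn mcoeffC (negPf m_neq0) mulr0 subr0.
Qed.

Lemma kolchin_ostrowski : alg_dependent k y -> lindep_mod_k y.
Proof.
case: (classic (lindep_mod_k y)) => // not_lindep [Q []].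
move: {2}(mlead Q) (erefl (mlead Q)) => m0.
elim/(@ltmwf r): m0 Q => m0 IH Q lead_Q Q_neq0 /mpolyOverP Q_k Qy.
pose Q1 := (Q@_m0)^-1 *: Q.
have lcQ_neq0 : Q@_m0 != 0 by rewrite -lead_Q mleadc_eq0.
have Q1_neq0 : Q1 != 0 by rewrite scaler_eq0 invr_eq0 negb_or lcQ_neq0.
have Q1_k : Q1 \is a mpolyOver r k.
  by apply: mpolyOverZ => //; rewrite rpredV; move/mpolyOverP: Q_k; apply.
have Q1y : Q1.@[y] = 0 by rewrite mevalZ Qy mulr0.
have Q1_m0 : Q1@_m0 = 1 by rewrite mcoeffZ mulVf.
have Q1_gt m : (m0 < m)%O -> Q1@_m = 0.
  by rewrite mcoeffZ -lead_Q => /mcoeff_gt_mlead ->; rewrite mulr0.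
apply: (lindep_of_affine_relation Q1_neq0 Q1_k Q1y); apply: mpoly_deg1E.
apply: (minimal_relation_deg1 Q1_k Q1y Q1_m0 Q1_gt) => R R_k Ry R_ge.
have [//|R_neq0] := eqVneq R 0; case: not_lindep.
by apply: (IH _ (mlead_lt R_neq0 R_ge) R) => //; apply/mpolyOverP.
Qed.

End KolchinOstrowski.

Section Expansion.
Variable x : K.
Hypotheses (x_k : x \in k) (Dx : D x = 1).

Lemma iterated_integral_expansion m phi : iter m D phi \in k ->
  exists ps : seq (nat * K),
    all (fun p => primitive p.2) ps /\ phi = \sum_(p <- ps) x ^+ p.1 * p.2.
Proof.
elim: m phi => [|m IH] phi phi_k.
  by exists [:: (0%N, phi)]; rewrite /= /primitive der_closed // big_seq1 mul1r.
rewrite iterSr in phi_k; have [ps [ps_prim Dphi]] := IH _ phi_k.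
pose z (p : nat * K) := p.2 / p.1.+1%:R.
have Dz p : D (z p) = D p.2 / p.1.+1%:R.
  by rewrite derM derV ?der_nat // mulr0 addr0.
have z_prim p : p \in ps -> primitive (z p).
  move=> p_ps; rewrite /primitive Dz rpredM ?rpredV ?rpred_nat //.
  exact: (allP ps_prim).
(* Integrating each x ^+ j * y by parts: A is a primitive of D phi modulo k. *)
pose A := \sum_(p <- ps) x ^+ p.1.+1 * z p.
have DA : D A = D phi + \sum_(p <- ps) x ^+ p.1.+1 * D (z p).
  rewrite Dphi der_sum -big_split; apply: eq_bigr => p _ /=.
  by rewrite derM derX Dx mulr1 /z; field; rewrite addrC natr1; apply: K0.
exists ((0%N, phi - A) :: [seq (p.1.+1, z p) | p <- ps]); split.
  rewrite /= all_map; apply/andP; split.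
    rewrite /primitive derB DA opprD addNKr rpredN big_seq rpred_sum // => p p_ps.
    by rewrite rpredM ?rpredX //; apply: z_prim.
  by apply/allP => p p_ps; apply: z_prim.
by rewrite big_cons big_map expr0 mul1r subrK.
Qed.

End Expansion.

Definition kspan1 (ys : seq K) (phi : K) := exists b (c : nat -> K),
  [/\ b \in k, forall i, c i \in k & phi = b + \sum_(i < size ys) c i * ys`_i].

Section KSpan.
Variable ys : seq K.

Lemma kspan1_k b : b \in k -> kspan1 ys b.
Proof.
move=> b_k; exists b, (fun _ => 0); split; rewrite ?rpred0 //.
by rewrite big1 ?addr0 // => i _; rewrite mul0r.
Qed.

Lemma kspan1_mem z : z \in ys -> kspan1 ys z.
Proof.
move=> z_ys; exists 0, (fun i => (i == index z ys)%:R).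
split; [exact: rpred0 | by move=> i; rewrite rpred_nat |].
have z_idx : (index z ys < size ys)%N by rewrite index_mem.
rewrite add0r (bigD1 (Ordinal z_idx)) //= eqxx mul1r nth_index //.
rewrite big1 ?addr0 // => i; rewrite -(inj_eq val_inj) /= => /negPf ->.
exact: mul0r.
Qed.

Lemma kspan1D phi psi : kspan1 ys phi -> kspan1 ys psi -> kspan1 ys (phi + psi).
Proof.
move=> [b1 [c1 [b1_k c1_k ->]]] [b2 [c2 [b2_k c2_k ->]]].
exists (b1 + b2), (fun i => c1 i + c2 i).
split; [exact: rpredD | by move=> i; rewrite rpredD |].
by under [in RHS]eq_bigr do rewrite mulrDl; rewrite big_split /=; ring.
Qed.

Lemma kspan1M u phi : u \in k -> kspan1 ys phi -> kspan1 ys (u * phi).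
Proof.
move=> u_k [b [c [b_k c_k ->]]]; exists (u * b), (fun i => u * c i).
split; [exact: rpredM | by move=> i; rewrite rpredM |].
rewrite mulrDr mulr_sumr.
by congr (_ + _); apply: eq_bigr => i _; rewrite mulrA.
Qed.

Lemma kspan1_sum (I : Type) (r : seq I) (P : pred I) (F : I -> K) :
  (forall i, P i -> kspan1 ys (F i)) -> kspan1 ys (\sum_(i <- r | P i) F i).
Proof.
move=> F_span; apply: big_ind; [exact/kspan1_k/rpred0 | exact: kspan1D | exact: F_span].
Qed.

End KSpan.

Lemma kspan1_trans ys zs phi :
  kspan1 ys phi -> (forall z, z \in ys -> kspan1 zs z) -> kspan1 zs phi.
Proof.
move=> [b [c [b_k c_k ->]]] ys_span; apply: kspan1D; first exact: kspan1_k.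
by apply: kspan1_sum => i _; apply: kspan1M => //; apply/ys_span/mem_nth.
Qed.

Lemma kspan1_rem ys : uniq ys -> lindep_mod_k (fun s : 'I_(size ys) => ys`_s) ->
  exists s0 : 'I_(size ys), forall z, z \in ys -> kspan1 (rem ys`_s0 ys) z.
Proof.
move=> ys_uniq [u [u_k [s0 us0_neq0] sum_k]]; exists s0.
have ys_s0 : kspan1 (rem ys`_s0 ys) ys`_s0.
  have ys_s0E : ys`_s0 =
      (u s0)^-1 * (\sum_s u s * ys`_s + \sum_(s | s != s0) - u s * ys`_s).
    rewrite (bigD1 s0) //= -addrA -big_split big1 ?addr0 ?mulKf // => s _ /=.
    by rewrite mulNr addrN.
  rewrite {2}ys_s0E.
  apply: kspan1M; first by rewrite rpredV.
  apply: kspan1D; first exact: kspan1_k.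
  apply: kspan1_sum => s s_neq; apply: kspan1M; first by rewrite rpredN.
  apply: kspan1_mem; rewrite (mem_rem_uniq _ ys_uniq) inE mem_nth // andbT.
  by rewrite nth_uniq // (inj_eq val_inj).
move=> z z_ys; have [->|z_neq] := eqVneq z ys`_s0; first exact: ys_s0.
by apply: kspan1_mem; rewrite (mem_rem_uniq _ ys_uniq) inE z_neq.
Qed.

Lemma iterated_integrals_kspan1 x n (f : 'I_n -> K) : x \in k -> D x = 1 ->
  (forall i, iterated_integral D k (f i)) ->
  exists ys, [/\ uniq ys, all primitive ys & forall i, kspan1 ys (f i)].
Proof.
move=> x_k Dx f_int.
have /fin_all_exists [ps ps_f] : forall i, exists ps : seq (nat * K),
    all (fun p => primitive p.2) ps /\ f i = \sum_(p <- ps) x ^+ p.1 * p.2.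
  by move=> i; have [m] := f_int i; apply: iterated_integral_expansion.
exists (undup (flatten [seq map snd (ps i) | i <- enum 'I_n])); split.
- exact: undup_uniq.
- apply/allP => z; rewrite mem_undup => /flatten_mapP [i _ /mapP [p p_ps ->]].
  exact: (allP (ps_f i).1).
- move=> i; rewrite (ps_f i).2 big_seq; apply: kspan1_sum => p p_ps.
  apply: kspan1M; first exact: rpredX.
  apply: kspan1_mem; rewrite mem_undup; apply/flatten_mapP.
  by exists i; rewrite ?mem_enum // map_f.
Qed.

Lemma alg_dependent_kspan1 ys n (f : 'I_n -> K) :
  (forall i, kspan1 ys (f i)) -> alg_dependent k f ->
  lindep_mod_k f \/ alg_dependent k (fun s : 'I_(size ys) => ys`_s).
Proof.
move=> f_span [P [P_neq0 P_k Pf]]; pose y (s : 'I_(size ys)) := ys`_s.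
have [b /fin_all_exists [c bc_f]] := fin_all_exists f_span.
have b_k i : b i \in k by case: (bc_f i).
have c_k i (s : 'I_(size ys)) : c i s \in k by case: (bc_f i) => _ /(_ s).
have fE i : f i = b i + \sum_(s < size ys) c i s * y s by case: (bc_f i).
pose Q := P \mPo [tuple (b i)%:MP + \sum_(s < size ys) c i s *: 'X_s | i < n].
have [Q_eq0 | Q_neq0] := eqVneq Q 0; [left | right].
  have [[u [u_k u_neq0 u_c]] | [d cd]] := rows_dependent_or_right_invertible c_k.
    exists u; split => //.
    under eq_bigr do rewrite fE mulrDr mulr_sumr.
    rewrite big_split /= exchange_big /= [X in _ + X]big1 ?addr0 => [|s _].
      by rewrite rpred_sum // => i _; rewrite rpredM.
    by under eq_bigr do rewrite mulrA; rewrite -mulr_suml u_c mul0r.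
  by case/negP: P_neq0; rewrite (comp_mpoly_affine_eq0 cd Q_eq0).
exists Q; split => //.
  apply/mpolyOverP; rewrite /Q comp_mpolyE rpred_sum // => m _.
  apply: mpolyOverZ => //; apply: rpred_prod => i _.
  rewrite tnth_mktuple rpredX // rpredD ?mpolyOverC // rpred_sum // => s _.
  by apply: mpolyOverZ => //; apply: mpolyOverX.
rewrite comp_mpoly_meval -[in RHS]Pf; apply: meval_eq => i; rewrite tnth_mktuple fE.
rewrite mevalD mevalC raddf_sum /=; congr (_ + _).
by apply: eq_bigr => s _; rewrite mevalZ mevalXU.
Qed.

Lemma alg_dependent_lindep ys n (f : 'I_n -> K) :
  uniq ys -> all primitive ys -> (forall i, kspan1 ys (f i)) ->
  alg_dependent k f -> lindep_mod_k f.
Proof.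
have [N] := ubnP (size ys); elim: N ys => // N IH ys; rewrite ltnS => size_ys.
move=> ys_uniq ys_prim f_span f_dep.
have [//|ys_dep] := alg_dependent_kspan1 f_span f_dep.
have y_prim (s : 'I_(size ys)) : primitive ys`_s by apply/(allP ys_prim)/mem_nth.
have [s0 ys_rem] := kspan1_rem ys_uniq (kolchin_ostrowski y_prim ys_dep).
apply: (IH (rem ys`_s0 ys)) => //.
- rewrite size_rem ?mem_nth //; apply: leq_trans size_ys.
  by rewrite ltn_predL (leq_ltn_trans (leq0n s0) (ltn_ord s0)).
- exact: rem_uniq.
- by apply/allP => z /mem_rem; apply: (allP ys_prim).
- by move=> i; apply: kspan1_trans (f_span i) ys_rem.
Qed.

End DifferentialSubfield.

End Derivation.

Theorem proposition34 (K : fieldType) (D : K -> K) (k : pred K) (n : nat)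
  (f : 'I_n -> K) :
  derivation D -> char0 K -> diff_subfield D k -> same_constants D k ->
  constants_alg_closed D ->
  (exists x, x \in k /\ D x = 1) ->
  (forall i, iterated_integral D k (f i)) ->
  alg_dependent k f ->
  exists u : 'I_n -> K,
    [/\ (forall i, u i \in k), (exists i, u i != 0) & \sum_(i < n) u i * f i \in k].
Proof.
move=> D_der K0 k_sub k_const _ [x [x_k Dx]] f_int f_dep.
have [ys [ys_uniq ys_prim f_span]] :=
  iterated_integrals_kspan1 D_der K0 k_sub x_k Dx f_int.
exact: (alg_dependent_lindep D_der K0 k_sub k_const ys_uniq ys_prim f_span f_dep).
Qed.
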